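(* Let $\Omega\subset\mathbb R^d$ be a bounded open set, $L>0$, $n\in\mathbb Z_+$, $X=\overline\Omega\times[-L,L]^n$, and let $\Gamma:\mathcal P(X)\times X\to X$ satisfy: (i) if $\mu_j\to\mu$ in $\mathcal P(X)$ then $\sup_{(x,y)\in X}|\Gamma(\mu_j,(x,y))-\Gamma(\mu,(x,y))|\to0$; (ii) there is $C_0>0$ such that $\sup_{\mu\in\mathcal P(X)}|\Gamma(\mu,(x_1,y_1))-\Gamma(\mu,(x_2,y_2))|\le C_0(|x_1-x_2|+|y_1-y_2|)$ for all $(x_1,y_1),(x_2,y_2)\in X$. Then $G:\mathcal P(X)\to\mathcal P(X)$, $G(\mu)=\Gamma(\mu,\cdot)_\#\mu$, is continuous.
   Context: $\mathcal P(X)$: Borel probability measures on $X$ with the 1-Wasserstein metric $W_1$; $F_\#$ denotes pushforward. *)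

From HB Require Import structures.
From mathcomp Require Import all_boot all_order all_algebra.
From mathcomp Require Import all_classical all_reals all_analysis.
Set Implicit Arguments. Unset Strict Implicit. Unset Printing Implicit Defensive.
Import Order.TTheory GRing.Theory Num.Theory.
Import numFieldNormedType.Exports.
Local Open Scope classical_set_scope.
Local Open Scope ring_scope.

Definition Pt (R : realType) (d n : nat) := ('rV[R]_d * 'rV[R]_n)%type.

Definition BPt (R : realType) (d n : nat) : measurableType _ :=
  g_sigma_algebraType (@open ('rV[R]_d * 'rV[R]_n)%type).

Definition eucl_norm (R : realType) (k : nat) (x : 'rV[R]_k) : R :=
  Num.sqrt (\sum_(i < k) x ord0 i ^+ 2).

Definition eucl_dist (R : realType) (d n : nat) (p q : Pt R d n) : R :=
  Num.sqrt (\sum_(i < d) (p.1 ord0 i - q.1 ord0 i) ^+ 2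
          + \sum_(i < n) (p.2 ord0 i - q.2 ord0 i) ^+ 2).

Definition Xset (R : realType) (d n : nat) (Omega : set 'rV[R]_d) (L : R)
  : set (Pt R d n) :=
  closure Omega `*` [set y : 'rV[R]_n | forall i, - L <= y ord0 i <= L].

Definition coupling (R : realType) (d n : nat)
  (mu nu : set (BPt R d n) -> \bar R)
  (pi : probability (BPt R d n * BPt R d n)%type R) : Prop :=
  (forall A : set (BPt R d n), measurable A -> pi (fst @^-1` A) = mu A) /\
  (forall A : set (BPt R d n), measurable A -> pi (snd @^-1` A) = nu A).

Definition W1 (R : realType) (d n : nat) (mu nu : set (BPt R d n) -> \bar R)
  : \bar R :=
  ereal_inf [set (\int[pi]_z ((eucl_dist (z.1 : Pt R d n) (z.2 : Pt R d n))%:E))%E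
            | pi in [set pi | coupling mu nu pi]].

(* Pushforward mu restricted to X by f : (f_# mu)(A) = mu (X ∩ f^{-1} A).
   For mu concentrated on X this is exactly f_# mu, and it only depends on
   f restricted to X. *)
Definition pushforward_on (R : realType) (d n : nat) (X : set (Pt R d n))
  (mu : set (BPt R d n) -> \bar R) (f : Pt R d n -> Pt R d n)
  : set (BPt R d n) -> \bar R :=
  fun A => mu (X `&` f @^-1` A).

(* mu belongs to P(X): Borel probability measure concentrated on X. *)
Definition inPX (R : realType) (d n : nat) (X : set (Pt R d n))
  (mu : probability (BPt R d n) R) : Prop := mu X = 1%E.

From HB Require Import structures.
From mathcomp Require Import all_boot all_order all_algebra.
From mathcomp Require Import all_classical all_reals all_analysis.
From mathcomp Require Import measurable_realfun.
From mathcomp Require Import ring lra.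
Import Order.TTheory GRing.Theory Num.Theory.
Import numFieldNormedType.Exports.
Set Implicit Arguments. Unset Strict Implicit. Unset Printing Implicit Defensive.
Local Open Scope classical_set_scope.
Local Open Scope ring_scope.

(* Take a coupling [pi] of [mu] and [nu] of small cost. Its image under
   (p, q) |-> (Gamma mu p, Gamma nu q) couples G(mu) and G(nu), at the cost
   int |Gamma mu p - Gamma nu q| dpi(p, q)
     <= sup_X |Gamma mu - Gamma nu| + 2 C0 int |p - q| dpi(p, q)
   (up to the constant of the triangle inequality). The second term is small with
   the cost of [pi], the first one with W1(mu, nu) by (i), once (i) is turned from a
   statement about sequences into an epsilon-delta statement. Measurability of
   [Gamma mu] on [X], needed for the pushforward, follows from the Lipschitz bound (ii). *)

Section sum_of_squares.
Variable R : realType.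

Lemma sum_sqr_le_sqr_sum_norm k (x : 'I_k -> R) :
  \sum_(i < k) x i ^+ 2 <= (\sum_(i < k) `|x i|) ^+ 2.
Proof.
elim: k x => [|k IH] x; first by rewrite !big_ord0 expr0n.
rewrite !big_ord_recr /=.
have := IH (fun i => x (widen_ord (leqnSn k) i)).
have : 0 <= \sum_(i < k) `|x (widen_ord (leqnSn k) i)| by apply: sumr_ge0.
have : 0 <= `|x ord_max| by [].
rewrite -(real_normK (num_real (x ord_max))); nra.
Qed.

Lemma norm_le_sqrt_sum_sqr k (x : 'I_k -> R) (a : R) j : 0 <= a ->
  `|x j| <= Num.sqrt (\sum_(i < k) x i ^+ 2 + a).
Proof.
have s0 : 0 <= \sum_(i < k) x i ^+ 2 by apply: sumr_ge0 => i _; exact: sqr_ge0.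
have s1 : 0 <= \sum_(i < k | i != j) x i ^+ 2 by apply: sumr_ge0 => i _; exact: sqr_ge0.
move=> a0; rewrite -sqrtr_sqr ler_sqrt ?addr_ge0 //.
by rewrite (bigD1 j) //= -addrA lerDl addr_ge0.
Qed.

End sum_of_squares.

Section eucl_dist.
Variables (R : realType) (d n : nat).
Implicit Types p q r : Pt R d n.

Definition l1_dist p q : R :=
  \sum_(i < d) `|p.1 ord0 i - q.1 ord0 i| + \sum_(i < n) `|p.2 ord0 i - q.2 ord0 i|.

Lemma eucl_dist_ge0 p q : 0 <= eucl_dist p q.
Proof. exact: sqrtr_ge0. Qed.

Lemma eucl_distC p q : eucl_dist p q = eucl_dist q p.
Proof.
by rewrite /eucl_dist; congr (Num.sqrt (_ + _)); apply: eq_bigr => i _;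
  rewrite -sqrrN opprB.
Qed.

Lemma norm_fst_le_eucl_dist p q j : `|p.1 ord0 j - q.1 ord0 j| <= eucl_dist p q.
Proof.
apply: (norm_le_sqrt_sum_sqr (fun i => p.1 ord0 i - q.1 ord0 i)).
by apply: sumr_ge0 => i _; exact: sqr_ge0.
Qed.

Lemma norm_snd_le_eucl_dist p q j : `|p.2 ord0 j - q.2 ord0 j| <= eucl_dist p q.
Proof.
rewrite /eucl_dist [X in Num.sqrt X]addrC.
apply: (norm_le_sqrt_sum_sqr (fun i => p.2 ord0 i - q.2 ord0 i)).
by apply: sumr_ge0 => i _; exact: sqr_ge0.
Qed.

Lemma eucl_norm_fst_le p q : eucl_norm (p.1 - q.1) <= eucl_dist p q.
Proof.
rewrite ler_sqrt ?addr_ge0 ?sumr_ge0 // => [|i _|i _]; try exact: sqr_ge0.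
under eq_bigr do rewrite !mxE.
by rewrite lerDl sumr_ge0 // => i _; exact: sqr_ge0.
Qed.

Lemma eucl_norm_snd_le p q : eucl_norm (p.2 - q.2) <= eucl_dist p q.
Proof.
rewrite ler_sqrt ?addr_ge0 ?sumr_ge0 // => [|i _|i _]; try exact: sqr_ge0.
under eq_bigr do rewrite !mxE.
by rewrite lerDr sumr_ge0 // => i _; exact: sqr_ge0.
Qed.

Lemma eucl_norm_split_le p q :
  eucl_norm (p.1 - q.1) + eucl_norm (p.2 - q.2) <= 2 * eucl_dist p q.
Proof. by rewrite mulr2n mulrDl mul1r lerD ?eucl_norm_fst_le ?eucl_norm_snd_le. Qed.

Lemma eucl_dist_le_l1 p q : eucl_dist p q <= l1_dist p q.
Proof.
have h1 := sum_sqr_le_sqr_sum_norm (fun i => p.1 ord0 i - q.1 ord0 i).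
have h2 := sum_sqr_le_sqr_sum_norm (fun i => p.2 ord0 i - q.2 ord0 i).
rewrite /eucl_dist /l1_dist; set a := \sum_(i < d) `|_|; set b := \sum_(i < n) `|_|.
have a0 : 0 <= a by apply: sumr_ge0.
have b0 : 0 <= b by apply: sumr_ge0.
rewrite -(ger0_norm (addr_ge0 a0 b0)) -sqrtr_sqr ler_sqrt ?sqr_ge0 //.
apply: le_trans (lerD h1 h2) _.
by rewrite -/a -/b sqrrD lerD2r lerDl; exact: mulrn_wge0 (mulr_ge0 a0 b0).
Qed.

Lemma l1_dist_le_coord_bound p q e :
  (forall j, `|p.1 ord0 j - q.1 ord0 j| <= e) ->
  (forall j, `|p.2 ord0 j - q.2 ord0 j| <= e) -> l1_dist p q <= (d + n)%:R * e.
Proof.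
move=> le1 le2; apply: (@le_trans _ _ (\sum_(i < d) e + \sum_(i < n) e)).
  by apply: lerD; apply: ler_sum => i _.
by rewrite !sumr_const !card_ord natrD mulrDl !mulr_natl.
Qed.

Lemma l1_le_eucl_dist p q : l1_dist p q <= (d + n)%:R * eucl_dist p q.
Proof.
apply: l1_dist_le_coord_bound => j.
  exact: norm_fst_le_eucl_dist.
exact: norm_snd_le_eucl_dist.
Qed.

Lemma l1_dist_triangle p q r : l1_dist p r <= l1_dist p q + l1_dist q r.
Proof.
rewrite /l1_dist addrACA -!big_split /=.
by apply: lerD; apply: ler_sum => i _; exact: ler_distD.
Qed.

(* The sharp constant [1] would need Cauchy-Schwarz; the constant [d + n] obtained
   through [l1_dist] suffices. *)
Lemma eucl_dist_triangle_weak p q r :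
  eucl_dist p r <= (d + n)%:R * (eucl_dist p q + eucl_dist q r).
Proof.
apply: le_trans (eucl_dist_le_l1 p r) _; apply: le_trans (l1_dist_triangle p q r) _.
by rewrite mulrDr; apply: lerD; exact: l1_le_eucl_dist.
Qed.

Lemma ball_eucl_dist_le p q e : ball p e q -> eucl_dist p q <= (d + n)%:R * e.
Proof.
move=> [[_ b1] [_ b2]]; apply: le_trans (eucl_dist_le_l1 p q) _.
by apply: l1_dist_le_coord_bound => j; apply: ltW; [exact: b1 | exact: b2].
Qed.

Lemma eucl_dist_lt_ball p q e : eucl_dist p q < e -> ball p e q.
Proof.
move=> pq; have e0 : 0 < e by apply: le_lt_trans (eucl_dist_ge0 p q) pq.
split; split => // i j; rewrite (ord1 i).
  exact: le_lt_trans (norm_fst_le_eucl_dist p q j) pq.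
exact: le_lt_trans (norm_snd_le_eucl_dist p q j) pq.
Qed.

End eucl_dist.

Lemma closed_box (R : realType) (n : nat) (L : R) :
  closed [set y : 'rV[R]_n | forall i, - L <= y ord0 i <= L].
Proof.
rewrite (_ : [set y | _] = \bigcap_(i in [set: 'I_n])
    ((fun y : 'rV[R]_n => y ord0 i) @^-1` ([set x | - L <= x] `&` [set x | x <= L]))).
  apply: closed_bigI => i _; apply: preimage_closed.
    by move=> y _; exact: coord_continuous.
  by apply: closedI; [exact: closed_ge | exact: closed_le].
apply/seteqP; split => y /=.
  by move=> h i _; have /andP[] := h i.
by move=> h i; have [-> ->] := h i I.
Qed.

Lemma closed_Xset (R : realType) (d n : nat) (Omega : set 'rV[R]_d) (L : R) :
  closed (@Xset R d n Omega L).
Proof.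
apply: closedI; apply: preimage_closed.
- by move=> x _; exact: cvg_fst.
- exact: closed_closure.
- by move=> x _; exact: cvg_snd.
- exact: closed_box.
Qed.

Section borel_measurability.
Variables (R : realType) (d n : nat).
Local Notation P := (Pt R d n).
Local Notation T := (BPt R d n).

Lemma closed_measurable (X : set P) : closed X -> measurable (X : set T).
Proof.
move=> cX; rewrite -(setCK X); apply: measurableC.
by apply: sub_sigma_algebra; exact: closed_openC.
Qed.

(* [G] is continuous on [X], so [X `&` G @^-1` U] is [X] intersected with an open
   union of balls centred in [X]. *)
Lemma lipschitz_measurable (X : set P) (G : P -> P) (C : R) : closed X -> 0 <= C ->
  (forall p q, X p -> X q -> eucl_dist (G p) (G q) <= C * eucl_dist p q) ->
  measurable_fun (X : set T) (G : T -> T).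
Proof.
move=> cX C0 lipG; apply: (@measurability _ _ T T X G open erefl).
move=> _ [U oU <-].
pose K := C * (d + n)%:R + 1.
have K0 : 0 < K by rewrite ltr_pwDr // mulr_ge0.
pose V := \bigcup_(pr in [set pr : P * R | [/\ X pr.1, 0 < pr.2 &
             ball (G pr.1) (K * pr.2) `<=` U]]) ball pr.1 pr.2.
have -> : X `&` G @^-1` U = X `&` V.
  apply/seteqP; split => q [Xq Uq]; split => //.
    have /nbhs_ballP [e e0 sub] := oU _ Uq.
    exists (q, e / K); last exact: ballxx (divr_gt0 e0 K0).
    by split => //=; [exact: divr_gt0 | rewrite mulrC divfK ?gt_eqF].
  case: Uq => -[p r] /= [Xp r0 sub] pq; apply/sub/eucl_dist_lt_ball.
  apply: le_lt_trans (lipG _ _ Xp Xq) _.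
  apply: le_lt_trans (ler_wpM2l C0 (ball_eucl_dist_le pq)) _.
  by rewrite /K mulrA mulrDl mul1r ltrDl.
apply: measurableI; first exact: closed_measurable.
by apply: sub_sigma_algebra; apply: bigcup_open => i _; exact: ball_open.
Qed.

Lemma continuous_measurable (f : P -> R) : continuous f ->
  measurable_fun [set: T] (f : T -> R).
Proof.
move=> cf; apply: (@measurability _ _ T R setT f _ (RGenOpens.measurableE R)).
move=> _ [_ [a [b ->] <-]]; apply: measurableI => //.
apply: sub_sigma_algebra; apply: (@open_comp _ R f); last exact: interval_open.
by move=> x _; exact: cf.
Qed.

Lemma measurable_eucl_dist :
  measurable_fun [set: T * T] (fun z : T * T => eucl_dist (z.1 : P) (z.2 : P)).
Proof.
have mfst i : measurable_fun [set: T] (fun p : T => (p : P).1 ord0 i).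
  apply: continuous_measurable => p.
  exact: (continuous_comp cvg_fst (@coord_continuous _ _ _ _ _ _)).
have msnd i : measurable_fun [set: T] (fun p : T => (p : P).2 ord0 i).
  apply: continuous_measurable => p.
  exact: (continuous_comp cvg_snd (@coord_continuous _ _ _ _ _ _)).
apply: (measurableT_comp (continuous_measurable_fun (@sqrt_continuous R))).
apply: measurable_funD; apply: measurable_sum => i; apply: measurable_funX;
  apply: measurable_funB.
- exact: measurableT_comp (mfst i) measurable_fst.
- exact: measurableT_comp (mfst i) measurable_snd.
- exact: measurableT_comp (msnd i) measurable_fst.
- exact: measurableT_comp (msnd i) measurable_snd.
Qed.

End borel_measurability.

Lemma ge0_integral_affine d' (T : measurableType d') (R : realType)
    (P : probability T R) (h : T -> R) (a b : R) :
  0 <= a -> 0 <= b -> (forall x, 0 <= h x) -> measurable_fun [set: T] h ->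
  (\int[P]_x (a + b * h x)%:E = a%:E + b%:E * \int[P]_x (h x)%:E)%E.
Proof.
move=> a0 b0 h0 mh; under eq_integral do rewrite EFinD EFinM.
rewrite ge0_integralD //.
- rewrite integral_cst // [X in (_ * X + _)%E](_ : _ = 1%E) ?mule1; last first.
    exact: probability_setT.
  rewrite ge0_integralZl_EFin //; last exact/measurable_EFinP.
  by move=> x _; rewrite lee_fin.
- by move=> x _; rewrite -EFinM lee_fin mulr_ge0.
- by apply/measurable_EFinP; exact: measurable_funM.
Qed.

Section couplings.
Variables (R : realType) (d n : nat).
Local Notation P := (Pt R d n).
Local Notation T := (BPt R d n).
Local Open Scope ereal_scope.

Definition transport_cost (pi : probability (T * T)%type R) : \bar R :=
  \int[pi]_z (eucl_dist (z.1 : P) (z.2 : P))%:E.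

Lemma coupling_pushforward (mu nu : set T -> \bar R) (pi : probability (T * T)%type R)
    (f g : T -> T) :
  coupling mu nu pi -> measurable_fun [set: T] f -> measurable_fun [set: T] g ->
  exists2 pi' : probability (T * T)%type R,
    coupling (pushforward mu f) (pushforward nu g) pi' &
    transport_cost pi' = \int[pi]_z (eucl_dist (f z.1 : P) (g z.2 : P))%:E.
Proof.
move=> [pi1 pi2] mf mg; pose fg (z : (T * T)%type) := (f z.1, g z.2).
have mfg : measurable_fun [set: (T * T)%type] fg.
  apply: measurable_fun_pair; first exact: measurableT_comp mf measurable_fst.
  exact: measurableT_comp mg measurable_snd.
pose Phi : {mfun (T * T)%type >-> (T * T)%type} :=
  HB.pack fg (isMeasurableFun.Build _ _ _ _ _ mfg).
exists (distribution pi Phi).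
  split => A mA.
    transitivity (pi (fst @^-1` (f @^-1` A))); first by [].
    by apply: pi1; rewrite -[X in measurable X]setTI; exact: mf.
  transitivity (pi (snd @^-1` (g @^-1` A))); first by [].
  by apply: pi2; rewrite -[X in measurable X]setTI; exact: mg.
rewrite /transport_cost ge0_integral_distribution //.
  by apply/measurable_EFinP; exact: measurable_eucl_dist.
by move=> z; rewrite lee_fin eucl_dist_ge0.
Qed.

Lemma coupling_swap (mu nu : set T -> \bar R) (pi : probability (T * T)%type R) :
  coupling mu nu pi -> exists2 pi' : probability (T * T)%type R,
    coupling nu mu pi' & transport_cost pi' = transport_cost pi.
Proof.
move=> [pi1 pi2]; pose sw (z : (T * T)%type) := (z.2, z.1).
have msw : measurable_fun [set: (T * T)%type] sw.
  exact: measurable_fun_pair measurable_snd measurable_fst.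
pose Sw : {mfun (T * T)%type >-> (T * T)%type} :=
  HB.pack sw (isMeasurableFun.Build _ _ _ _ _ msw).
exists (distribution pi Sw).
  by split => A mA; [exact: pi2 | exact: pi1].
rewrite /transport_cost ge0_integral_distribution //.
- by apply: eq_integral => z _ /=; rewrite eucl_distC.
- by apply/measurable_EFinP; exact: measurable_eucl_dist.
- by move=> z; rewrite lee_fin eucl_dist_ge0.
Qed.

Lemma W1C (mu nu : set T -> \bar R) : W1 mu nu = W1 nu mu.
Proof.
suff W1_le (m m' : set T -> \bar R) : W1 m' m <= W1 m m'.
  by apply/le_anti; rewrite !W1_le.
apply: le_ereal_inf => _ [pi cpi <-].
by have [pi' cpi' cost_eq] := coupling_swap cpi; exists pi'.
Qed.

Lemma pushforward_restrict (m : probability T R) (X : set P) (G : P -> P) (A : set T) :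
  closed X -> m X = 1 -> measurable_fun (X : set T) (G : T -> T) -> measurable A ->
  pushforward m ((G : T -> T) \_ X) A = pushforward_on X m G A.
Proof.
move=> cX mX1 mG mA; have mX := closed_measurable cX.
have mXC : m (~` X) = 0 by rewrite probability_setC // mX1 subee.
rewrite /pushforward preimage_restrict setUC measureU0 //.
- exact: mG.
- by case: ifP => _ //; exact: measurableC.
- by case: ifP => _ //; exact: measure0.
Qed.

Lemma coupling_ae_in (X : set P) (mu nu : probability T R)
    (pi : probability (T * T)%type R) :
  closed X -> mu X = 1 -> nu X = 1 -> coupling mu nu pi ->
  {ae pi, forall z : (T * T)%type, X z.1 /\ X z.2}.
Proof.
move=> cX muX nuX [pi1 pi2].
have mXC : measurable (~` X : set T) by apply: measurableC; exact: closed_measurable.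
have m1 : measurable (fst @^-1` (~` X) : set (T * T)%type).
  by rewrite -(setTI (fst @^-1` _)); exact: measurable_fst measurableT _ mXC.
have m2 : measurable (snd @^-1` (~` X) : set (T * T)%type).
  by rewrite -(setTI (snd @^-1` _)); exact: measurable_snd measurableT _ mXC.
exists (fst @^-1` (~` X) `|` snd @^-1` (~` X)); split; first exact: measurableU.
  apply/eqP; rewrite eq_le measure_ge0 andbT.
  apply: le_trans (measureU2 _ m1 m2) _.
  have muXC : mu (~` X) = 0.
    by rewrite probability_setC ?muX ?subee //; exact: closed_measurable.
  have nuXC : nu (~` X) = 0.
    by rewrite probability_setC ?nuX ?subee //; exact: closed_measurable.
  rewrite [Y in Y + _](_ : _ = 0); last by rewrite -muXC; exact: pi1.
  by rewrite [Y in _ + Y](_ : _ = 0) ?adde0 //; rewrite -nuXC; exact: pi2.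
by move=> z /= /not_andP [] ?; [left | right].
Qed.

End couplings.

Section W1_pushforward.
Variables (R : realType) (d n : nat).
Local Notation P := (Pt R d n).
Local Notation T := (BPt R d n).

Lemma W1_pushforward_on_le (X : set P) (mu nu : probability T R)
    (pi : probability (T * T)%type R) (f g : P -> P) (s c : R) :
  closed X -> mu X = 1%E -> nu X = 1%E -> coupling mu nu pi ->
  measurable_fun (X : set T) (f : T -> T) -> measurable_fun (X : set T) (g : T -> T) ->
  0 <= s -> 0 <= c ->
  (forall p, X p -> eucl_dist (f p) (g p) <= s) ->
  (forall p q, X p -> X q -> eucl_dist (g p) (g q) <= c * eucl_dist p q) ->
  (W1 (pushforward_on X mu f) (pushforward_on X nu g) <=
    ((d + n)%:R * s)%:E + ((d + n)%:R * c)%:E * transport_cost pi)%E.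
Proof.
move=> cX muX nuX cpi mf mg s0 c0 fg_close g_lip.
have mX := closed_measurable cX.
have mfX := (measurable_restrictT (f : T -> T) mX).1 mf.
have mgX := (measurable_restrictT (g : T -> T) mX).1 mg.
have [pi' [pi'1 pi'2] cost_pi'] := coupling_pushforward cpi mfX mgX.
apply: (@le_trans _ _ (transport_cost pi')).
  apply: ereal_inf_lbound; exists pi' => //.
  by split => A mA; rewrite -pushforward_restrict //; [exact: pi'1 | exact: pi'2].
have dist0 (z : (T * T)%type) : 0 <= eucl_dist (z.1 : P) (z.2 : P) by exact: eucl_dist_ge0.
rewrite cost_pi' /transport_cost -ge0_integral_affine ?mulr_ge0 ?ler0n //; last first.
  exact: measurable_eucl_dist.
apply: ae_ge0_le_integral => //.
- by move=> z _; rewrite lee_fin eucl_dist_ge0.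
- apply/measurable_EFinP.
  have mfg : measurable_fun [set: (T * T)%type]
      (fun z : (T * T)%type => (((f : T -> T) \_ X) z.1, ((g : T -> T) \_ X) z.2)).
    apply: measurable_fun_pair; first exact: measurableT_comp mfX measurable_fst.
    exact: measurableT_comp mgX measurable_snd.
  exact: measurableT_comp (@measurable_eucl_dist R d n) mfg.
- by move=> z _; rewrite lee_fin addr_ge0 ?mulr_ge0 ?ler0n.
- apply/measurable_EFinP; apply: measurable_funD => //.
  by apply: measurable_funM => //; exact: measurable_eucl_dist.
apply: filterS (coupling_ae_in cX muX nuX cpi) => z [X1 X2] _.
rewrite !patchT ?in_setE // lee_fin.
apply: le_trans (eucl_dist_triangle_weak _ (g z.1) _) _.
by rewrite -mulrA -mulrDr ler_wpM2l ?ler0n // lerD ?fg_close ?g_lip.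
Qed.

Lemma W1_pushforward_on_le_of_lt (X : set P) (mu nu : probability T R)
    (f g : P -> P) (s c x : R) :
  closed X -> mu X = 1%E -> nu X = 1%E ->
  measurable_fun (X : set T) (f : T -> T) -> measurable_fun (X : set T) (g : T -> T) ->
  0 <= s -> 0 <= c ->
  (forall p, X p -> eucl_dist (f p) (g p) <= s) ->
  (forall p q, X p -> X q -> eucl_dist (g p) (g q) <= c * eucl_dist p q) ->
  (W1 mu nu < x%:E)%E ->
  (W1 (pushforward_on X mu f) (pushforward_on X nu g) <=
    ((d + n)%:R * s + (d + n)%:R * c * x)%:E)%E.
Proof.
move=> cX muX nuX mf mg s0 c0 fg_close g_lip.
case/ereal_inf_lt => _ [pi cpi <-]; rewrite -/(transport_cost pi) => cost_lt.
apply: le_trans (W1_pushforward_on_le cX muX nuX cpi mf mg s0 c0 fg_close g_lip) _.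
rewrite EFinD [X in (_ <= _ + X)%E]EFinM leeD2l //.
by apply: lee_wpmul2l; [rewrite lee_fin mulr_ge0 ?ler0n | exact: ltW].
Qed.

Lemma W1_close_uniformly_close (X : set P) (Gamma : probability T R -> P -> P) :
  (forall (mu_ : nat -> probability T R) (mu : probability T R),
     (forall j, inPX X (mu_ j)) -> inPX X mu ->
     (forall e : R, 0 < e -> exists N, forall j, (N <= j)%N ->
        (W1 (mu_ j) mu <= e%:E)%E) ->
     forall e : R, 0 < e -> exists N, forall j, (N <= j)%N ->
        forall p, X p -> eucl_dist (Gamma (mu_ j) p) (Gamma mu p) <= e) ->
  forall mu, inPX X mu -> forall s : R, 0 < s ->
  exists2 delta : R, 0 < delta & forall nu, inPX X nu -> (W1 mu nu < delta%:E)%E ->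
    forall p, X p -> eucl_dist (Gamma mu p) (Gamma nu p) <= s.
Proof.
move=> Gamma_cvg mu muX s s0; apply: contrapT => not_close.
have far j : exists nu, [/\ inPX X nu, (W1 mu nu < (j.+1%:R^-1)%:E)%E &
    exists2 p, X p & s < eucl_dist (Gamma mu p) (Gamma nu p)].
  apply: contrapT => not_far; apply: not_close; exists j.+1%:R^-1.
    by rewrite invr_gt0 ltr0n.
  move=> nu nuX Wlt p Xp; rewrite leNgt; apply/negP => gt.
  by apply: not_far; exists nu; split => //; exists p.
have [nu_ nu_far] := choice far.
have nu_X j : inPX X (nu_ j) by have [] := nu_far j.
have nu_cvg e : 0 < e -> exists N, forall j, (N <= j)%N -> (W1 (nu_ j) mu <= e%:E)%E.
  move=> e0; exists (Num.Def.archi_bound e^-1) => j Nj.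
  have [_ Wlt _] := nu_far j; rewrite W1C; apply/ltW/(lt_le_trans Wlt).
  rewrite lee_fin; apply/ltW; rewrite invf_plt ?posrE ?ltr0n //.
  apply: lt_le_trans (archi_boundP _) _; first by rewrite invr_ge0 ltW.
  by rewrite ler_nat; apply: leq_trans Nj _.
have [N N_close] := Gamma_cvg nu_ mu nu_X muX nu_cvg s s0.
have [_ _ [p Xp]] := nu_far N.
by rewrite eucl_distC ltNge N_close.
Qed.

End W1_pushforward.

Unset Implicit Arguments.

Theorem corollaryD4 (R : realType) (d n : nat) (Omega : set 'rV[R]_d) (L : R)
  (Gamma : probability (BPt R d n) R -> Pt R d n -> Pt R d n) :
  open Omega -> bounded_set Omega -> 0 < L -> (0 < n)%N ->
  let X := @Xset R d n Omega L in
  (* Gamma(mu, .) maps X into X *)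
  (forall mu, inPX X mu -> forall p, X p -> X (Gamma mu p)) ->
  (* (i) uniform continuity in mu w.r.t. W1 convergence *)
  (forall (mu_ : nat -> probability (BPt R d n) R) (mu : probability (BPt R d n) R),
     (forall j, inPX X (mu_ j)) -> inPX X mu ->
     (forall e : R, 0 < e -> exists N, forall j, (N <= j)%N ->
        (W1 (mu_ j) mu <= e%:E)%E) ->
     forall e : R, 0 < e -> exists N, forall j, (N <= j)%N ->
        forall p, X p -> eucl_dist (Gamma (mu_ j) p) (Gamma mu p) <= e) ->
  (* (ii) uniform Lipschitz bound in (x, y) *)
  (exists C0 : R, 0 < C0 /\
     forall mu, inPX X mu -> forall p1 p2, X p1 -> X p2 ->
       eucl_dist (Gamma mu p1) (Gamma mu p2) <= C0 * (eucl_norm (p1.1 - p2.1) + eucl_norm (p1.2 - p2.2))) ->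
  (* G(mu) = Gamma(mu, .)_# mu is continuous on P(X) for W1 *)
  forall mu, inPX X mu -> forall e : R, 0 < e -> exists2 delta : R, 0 < delta &
    forall nu, inPX X nu -> (W1 mu nu < delta%:E)%E ->
      (W1 (pushforward_on X mu (Gamma mu)) (pushforward_on X nu (Gamma nu)) < e%:E)%E.
Proof.
move=> _ _ _ n_gt0 X _ Gamma_cvg [C0 [C0_gt0 Gamma_lip]] mu muX e e_gt0.
have cX : closed X by exact: closed_Xset.
pose K : R := (d + n)%:R; pose c := 2 * C0.
have K_gt0 : 0 < K by rewrite ltr0n addn_gt0 n_gt0 orbT.
have c_gt0 : 0 < c by rewrite mulr_gt0.
have lip m : inPX X m -> forall p q, X p -> X q ->
    eucl_dist (Gamma m p) (Gamma m q) <= c * eucl_dist p q.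
  move=> mX p q Xp Xq; apply: le_trans (Gamma_lip m mX p q Xp Xq) _.
  by rewrite /c [2 * C0]mulrC -mulrA ler_pM2l // eucl_norm_split_le.
have meas m : inPX X m ->
    measurable_fun (X : set (BPt R d n)) (Gamma m : BPt R d n -> BPt R d n).
  by move=> mX; exact: lipschitz_measurable cX (ltW c_gt0) (lip m mX).
pose s := e / (2 * K); pose delta2 := e / (4 * (K * c)).
have s_gt0 : 0 < s by rewrite divr_gt0 ?mulr_gt0.
have [delta1 delta1_gt0 close] := W1_close_uniformly_close Gamma_cvg muX s_gt0.
exists (Num.min delta1 delta2); first by rewrite lt_min delta1_gt0 divr_gt0 ?mulr_gt0.
move=> nu nuX; rewrite EFin_min lt_min => /andP[W1_lt1 W1_lt2].
apply: le_lt_trans (W1_pushforward_on_le_of_lt cX muX nuX (meas _ muX) (meas _ nuX)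
  (ltW s_gt0) (ltW c_gt0) (close nu nuX W1_lt1) (lip nu nuX) W1_lt2) _.
have -> : K * s = e / 2 by rewrite /s; field; rewrite -natrD lt0r_neq0.
have -> : K * c * delta2 = e / 4.
  by rewrite /delta2; field; rewrite -?natrD ?mulf_neq0 ?lt0r_neq0.
by rewrite lte_fin; lra.
Qed.
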